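(* Let $A$ be an infinite set, $(x_n^* )_{ n \in \mathbb{N} }$ a sequence in $[-1,1]^A$ and $(f_n)_{ n \in \mathbb{N} }$ a sequence in $FBL(A)$ such that: (1) $f_n \geq 0$ for every $n$; (2) $f_n(x_n^* )=1$ for every $n$; (3) for every finite set $F\subseteq A$ there is $n\in\mathbb{N}$ with $x_n^*|_F=0$. Then for every $\varepsilon>0$ there is a subsequence $(f_{n_k})_{ k \in \mathbb{N} }$ such that $\big\| \sum_{k=1}^{m} f_{n_k} \big\| \geq m - \varepsilon$ for every $m\in \mathbb{N}$.
   Context: For a nonempty set $A$ and $x\in A$, $\delta_x:[-1,1]^A\to[-1,1]$ is $\delta_x(x^* )=x^*(x)$. For $f:[-1,1]^A\to\mathbb{R}$, $$\|f\| = \sup \Big\{\sum_{i = 1}^n | f(x_{i}^{\ast})| : n \in \mathbb{N},\ x_1^{\ast}, \ldots, x_n^{\ast} \in [-1,1]^A,\ \sup_{x \in A} \sum_{i=1}^n |x_i^{\ast}(x)| \leq 1 \Big\}.$$ $FBL(A)$ is the Banach lattice generated by the functions $\delta_x$ ($x\in A$) inside the Banach lattice of all functions $[-1,1]^A\to\mathbb{R}$ with finite norm (pointwise operations and order), equipped with this norm. $[-1,1]^A$ carries the product topology. *)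

From HB Require Import structures.
From mathcomp Require Import all_boot all_order all_algebra.
From mathcomp Require Import all_classical all_reals.
From mathcomp Require Import ereal.


Set Implicit Arguments. Unset Strict Implicit. Unset Printing Implicit Defensive.
Import Order.TTheory GRing.Theory Num.Theory.
Local Open Scope ring_scope.
Local Open Scope classical_set_scope.

Section FBL.
Variables (R : realType) (A : Type).

Definition in_cube (xs : A -> R) : Prop := forall a, (-1 <= xs a <= 1)%R.

Definition fdelta (x : A) : (A -> R) -> R := fun xs => xs x.

Definition fbl_norm (f : (A -> R) -> R) : \bar R :=
  ereal_sup [set r : \bar R | exists (n : nat) (xs : 'I_n -> (A -> R)),
     [/\ (forall i, in_cube (xs i)),
         (forall x : A, \sum_(i < n) `|xs i x| <= 1)%R &
         r = (\sum_(i < n) `|f (xs i)|)%:E]].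

Inductive fvl : ((A -> R) -> R) -> Prop :=
  | fvl_fdelta x : fvl (fdelta x)
  | fvl_add f g : fvl f -> fvl g -> fvl (fun xs => (f xs + g xs)%R)
  | fvl_scale (c : R) f : fvl f -> fvl (fun xs => (c * f xs)%R)
  | fvl_max f g : fvl f -> fvl g -> fvl (fun xs => Num.max (f xs) (g xs)).

(* Functions are only relevant on [-1,1]^A
   (the norm, order and evaluations used only look at the cube). *)
Definition FBL (f : (A -> R) -> R) : Prop :=
  (fbl_norm f < +oo)%E /\
  forall e : R, (0 < e)%R -> exists g, fvl g /\ (fbl_norm (fun xs => (f xs - g xs)%R) < e%:E)%E.

End FBL.

(* Every element of FBL(A) is, up to any prescribed error, determined on the cube by
   finitely many coordinates, because the lattice expressions in the delta_x are.  Choose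
   inductively indices n_k and finite sets G_k such that f_{n_k} moves by at most eps/2^(k+1)
   when x*_{n_k} is restricted to G_k, and such that x*_{n_j} vanishes on G_k for j > k
   (hypothesis (3)).  The restrictions y_k of the x*_{n_k} to G_k then have disjoint supports,
   so (y_1, ..., y_m) is admissible in the definition of the norm, and
   ||f_{n_1} + ... + f_{n_m}|| >= sum_k f_{n_k}(y_k) >= sum_k (1 - eps/2^(k+1)) >= m - eps. *)
From HB Require Import structures.
From mathcomp Require Import all_boot all_order all_algebra.
From mathcomp Require Import all_classical all_reals.
From mathcomp Require Import ereal.
From mathcomp Require Import ring lra.

Set Implicit Arguments.
Unset Strict Implicit.
Unset Printing Implicit Defensive.

Import Order.TTheory GRing.Theory Num.Theory.
Local Open Scope ring_scope.
Local Open Scope classical_set_scope.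

Section FBLLocality.
Variables (R : realType) (A : Type).
Implicit Types (h g : (A -> R) -> R) (x : A -> R) (F : set A).

Definition restrict F x : A -> R := fun a => if `[< F a >] then x a else 0.

Lemma in_cube0 : in_cube (fun _ : A => 0 : R).
Proof. by move=> a; rewrite lerN10 ler01. Qed.

Lemma in_cube_restrict F x : in_cube x -> in_cube (restrict F x).
Proof. by move=> hx a; rewrite /restrict; case: ifP => _; [exact: hx | exact: in_cube0]. Qed.

Definition disjoint_supports {I : Type} (y : I -> A -> R) : Prop :=
  forall i j a, i <> j -> y i a = 0 \/ y j a = 0.

Lemma restrict_disjoint_supports (xs : nat -> A -> R) (G : nat -> set A) :
  (forall i j a, (i < j)%N -> G i a -> xs j a = 0) ->
  disjoint_supports (fun i => restrict (G i) (xs i)).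
Proof.
move=> xs_vanish.
have lt_case i j a : (i < j)%N -> restrict (G i) (xs i) a = 0 \/ restrict (G j) (xs j) a = 0.
  move=> ij; rewrite /restrict; case: asboolP => [Ga | _]; last by left.
  by right; rewrite (xs_vanish _ _ _ ij Ga); case: ifP.
move=> i j a /eqP; rewrite neq_ltn => /orP[ij | ji]; first exact: lt_case.
by case: (lt_case j i a ji); [right | left].
Qed.

Lemma sum_norm_disjoint_le1 m (y : 'I_m -> A -> R) :
  (forall i, in_cube (y i)) -> disjoint_supports y ->
  forall a, \sum_(i < m) `|y i a| <= 1.
Proof.
move=> ycube ydisj a.
have [[i0 yi0] | yall0] := pselect (exists i, y i a != 0); last first.
  rewrite big1 ?ler01 // => i _.
  by case: (eqVneq (y i a) 0) => [-> | yi]; [rewrite normr0 | case: yall0; exists i].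
rewrite (bigD1 i0) //= big1 ?addr0; first by rewrite ler_norml; exact: ycube.
move=> j /eqP ji0; have [-> | yi00] := ydisj j i0 a ji0; first by rewrite normr0.
by move: yi0; rewrite yi00 eqxx.
Qed.

Lemma fbl_norm_ge_disjoint h m (y : 'I_m -> A -> R) :
  (forall i, in_cube (y i)) -> disjoint_supports y ->
  ((\sum_(i < m) `|h (y i)|)%:E <= fbl_norm h)%E.
Proof.
move=> ycube ydisj; apply: ereal_sup_ubound.
by exists m, y; split => //; exact: sum_norm_disjoint_le1.
Qed.

Lemma fbl_norm_ge_diag_sum m (hs : 'I_m -> (A -> R) -> R) (y : 'I_m -> A -> R) :
  (forall i, in_cube (y i)) -> disjoint_supports y ->
  (forall i z, in_cube z -> 0 <= hs i z) ->
  ((\sum_(i < m) hs i (y i))%:E <= fbl_norm (fun z => (\sum_(k < m) hs k z)%R))%E.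
Proof.
move=> ycube ydisj hs_ge0; apply: le_trans (fbl_norm_ge_disjoint _ ycube ydisj).
rewrite lee_fin; apply: ler_sum => i _; apply: le_trans (ler_norm _).
by rewrite (bigD1 i) //= lerDl sumr_ge0 // => k _; exact: hs_ge0.
Qed.

Lemma fbl_norm_ge_eval h x : in_cube x -> (`|h x|%:E <= fbl_norm h)%E.
Proof.
move=> hx; have := fbl_norm_ge_disjoint h (y := fun _ : 'I_1 => x).
by rewrite big_ord1; apply => // i j a; rewrite !ord1.
Qed.

Lemma fvl_local g : fvl g ->
  exists F, finite_set F /\ forall x y, (forall a, F a -> x a = y a) -> g x = g y.
Proof.
have local_binop (op : R -> R -> R) g1 g2 F1 F2 : finite_set F1 -> finite_set F2 ->
    (forall x y, (forall a, F1 a -> x a = y a) -> g1 x = g1 y) ->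
    (forall x y, (forall a, F2 a -> x a = y a) -> g2 x = g2 y) ->
    exists F, finite_set F /\ forall x y, (forall a, F a -> x a = y a) ->
      op (g1 x) (g2 x) = op (g1 y) (g2 y).
  move=> F1fin F2fin g1F1 g2F2; exists (F1 `|` F2); split; first by rewrite finite_setU.
  by move=> x y xy; rewrite (g1F1 x y) ?(g2F2 x y) // => a Fa; apply: xy; [right | left].
elim=> [a | g1 g2 _ [F1 [F1fin g1F1]] _ [F2 [F2fin g2F2]] | c g1 _ [F1 [F1fin g1F1]]
         | g1 g2 _ [F1 [F1fin g1F1]] _ [F2 [F2fin g2F2]]].
- by exists [set a]; split; [exact: finite_set1 | move=> x y xy; rewrite /fdelta xy].
- exact: (local_binop +%R _ _ _ _ F1fin F2fin g1F1 g2F2).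
- by exists F1; split => // x y xy; rewrite (g1F1 x y).
- exact: (local_binop Num.max _ _ _ _ F1fin F2fin g1F1 g2F2).
Qed.

Lemma fvl_at0 g : fvl g -> g (fun _ => 0) = 0.
Proof.
elim => //= [g1 g2 _ -> _ -> | c g1 _ -> | g1 g2 _ -> _ ->];
  by rewrite ?addr0 ?mulr0 ?maxxx.
Qed.

Lemma FBL_at0 h : FBL h -> h (fun _ => 0) = 0.
Proof.
move=> [_ happrox]; apply/eqP/negPn/negP => h0.
have [g [gfvl hg]] := happrox `|h (fun _ => 0)| ltac:(by rewrite normr_gt0).
have := le_lt_trans (fbl_norm_ge_eval _ in_cube0) hg.
by rewrite lte_fin /= (fvl_at0 gfvl) subr0 ltxx.
Qed.

Lemma FBL_restrict_approx h (d : R) : FBL h -> 0 < d ->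
  exists F, finite_set F /\ forall x, in_cube x -> `|h x - h (restrict F x)| <= d.
Proof.
move=> [_ happrox] d0.
have [g [gfvl hg]] := happrox (d / 2) (divr_gt0 d0 (ltr0Sn _ 1)).
have [F [Ffin gF]] := fvl_local gfvl.
exists F; split => // x hx.
have hgx z : in_cube z -> `|h z - g z| <= d / 2.
  by move=> hz; rewrite -lee_fin ltW // (le_lt_trans (fbl_norm_ge_eval _ hz) hg).
have gFx : g (restrict F x) = g x by apply: gF => a Fa; rewrite /restrict asboolT.
have -> : h x - h (restrict F x) = (h x - g x) - (h (restrict F x) - g (restrict F x)).
  by rewrite gFx opprB addrA subrK.
rewrite [d]splitr (le_trans (ler_normB _ _)) // lerD ?hgx //.
exact: in_cube_restrict.
Qed.

End FBLLocality.

Section VanishingSubsequence.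
Variables (R : realType) (A : Type).
Variables (xs : nat -> A -> R) (G : nat -> nat -> set A) (w : nat -> A) (pick : set A -> nat).
Hypothesis xs_w : forall n, xs n (w n) != 0.
Hypothesis pickP : forall F, finite_set F -> forall a, F a -> xs (pick F) a = 0.
Hypothesis finite_G : forall n k, finite_set (G n k).

(* The points w i, i <= pick S, put into the next stage force every later index above pick S. *)
Fixpoint stage (k : nat) : set A :=
  if k is k'.+1 then
    stage k' `|` G (pick (stage k')) k' `|` [set w i | i in `I_(pick (stage k')).+1]
  else set0.

Let nk k := pick (stage k).

Lemma finite_stage k : finite_set (stage k).
Proof.
elim: k => [|k IHk] /=; first exact: finite_set0.
by rewrite !finite_setU; split; [split | exact/finite_image/finite_II].
Qed.

Lemma stage_sub j k : (j <= k)%N -> stage j `<=` stage k.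
Proof.
elim: k => [|k IHk]; first by rewrite leqn0 => /eqP ->.
rewrite leq_eqVlt => /orP[/eqP -> // | /IHk jk a /jk ?]; by left; left.
Qed.

Lemma stage_sub_next j k : (j < k)%N ->
  G (nk j) j `|` [set w i | i in `I_(nk j).+1] `<=` stage k.
Proof.
by move=> jk a Ga; apply: (stage_sub jk); case: Ga; [left; right | right].
Qed.

Lemma nk_vanish k a : stage k a -> xs (nk k) a = 0.
Proof. exact: pickP (finite_stage k) a. Qed.

Lemma nk_increasing : {homo nk : i j / (i < j)%N >-> (i < j)%N}.
Proof.
move=> j k jk; rewrite ltnNge; apply/negP => kj.
have /nk_vanish : stage k (w (nk k)).
  by apply: (stage_sub_next jk); right; exists (nk k) => //=; rewrite ltnS.
by move/eqP; rewrite (negbTE (xs_w _)).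
Qed.

End VanishingSubsequence.

Lemma exists_vanishing_subsequence (R : realType) (A : Type)
    (xs : nat -> A -> R) (G : nat -> nat -> set A) :
  (forall n, exists a, xs n a != 0) ->
  (forall F : set A, finite_set F -> exists n, forall a, F a -> xs n a = 0) ->
  (forall n k, finite_set (G n k)) ->
  exists nk : nat -> nat, {homo nk : i j / (i < j)%N >-> (i < j)%N} /\
    forall i j a, (i < j)%N -> G (nk i) i a -> xs (nk j) a = 0.
Proof.
move=> xs_nz xs_vanish finite_G.
have [w xs_w] := choice xs_nz.
have pick_ex (F : set A) : exists n, finite_set F -> forall a, F a -> xs n a = 0.
  have [/xs_vanish [n ?] | infF] := pselect (finite_set F); first by exists n.
  by exists 0%N => /infF.
have [pick pickP] := choice pick_ex.
exists (fun k => pick (stage G w pick k)); split; first exact: nk_increasing xs_w pickP finite_G.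
move=> i j a ij Ga; apply: (nk_vanish pickP finite_G).
by apply: (stage_sub_next ij); left.
Qed.

Lemma sum_geometric_half (R : realFieldType) (e : R) m :
  \sum_(i < m) e / 2 ^+ i.+1 = e - e / 2 ^+ m.
Proof.
elim: m => [|m IHm]; first by rewrite big_ord0 expr0 divr1 subrr.
rewrite big_ord_recr /= IHm exprS.
by field; rewrite expf_neq0 ?pnatr_eq0.
Qed.

Theorem mainTheorem5 (R : realType) (A : Type)
  (xs : nat -> A -> R) (f : nat -> (A -> R) -> R) :
  infinite_set [set: A] ->
  (forall n, in_cube (xs n)) ->
  (forall n, FBL (f n)) ->
  (forall n (y : A -> R), in_cube y -> 0 <= f n y) ->
  (forall n, f n (xs n) = 1) ->
  (forall F : set A, finite_set F -> exists n, forall a, F a -> xs n a = 0) ->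
  forall eps : R, 0 < eps ->
  exists nk : nat -> nat, {homo nk : i j / (i < j)%N >-> (i < j)%N} /\
    forall m : nat,
      ((m%:R - eps)%:E <= fbl_norm (fun y => (\sum_(k < m) f (nk k) y)%R))%E.
Proof.
move=> _ xs_cube f_FBL f_ge0 f_xs xs_vanish eps eps0.
pose d k : R := eps / 2 ^+ k.+1.
have f_approx (p : nat * nat) : exists F, finite_set F /\
    forall x, in_cube x -> `|f p.1 x - f p.1 (restrict F x)| <= d p.2.
  by apply: FBL_restrict_approx; rewrite ?divr_gt0 ?exprn_gt0.
have [G GP] := choice f_approx.
have xs_nz n : exists a, xs n a != 0.
  apply: contrapT => /forallNP xs0.
  have xs_eq0 : xs n = fun _ => 0 by apply/funext => a; apply/eqP/negPn/negP/xs0.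
  by move: (f_xs n); rewrite xs_eq0 FBL_at0 // => /esym/eqP; rewrite oner_eq0.
have [nk [nk_incr nk_vanish]] := exists_vanishing_subsequence (G := fun n k => G (n, k))
  xs_nz xs_vanish (fun n k => (GP (n, k)).1).
exists nk; split => // m.
pose y k := restrict (G (nk k, k)) (xs (nk k)).
have y_disj : disjoint_supports (fun i : 'I_m => y i).
  move=> i j a ij.
  apply: (restrict_disjoint_supports (xs := xs \o nk) (G := fun k => G (nk k, k))).
    exact: nk_vanish.
  by move/val_inj.
have f_y k : 1 - d k <= f (nk k) (y k).
  by have := (GP (nk k, k)).2 _ (xs_cube (nk k)); rewrite /= ler_distlC f_xs => /andP[].
have y_cube (i : 'I_m) : in_cube (y i) by exact: in_cube_restrict.
apply: le_trans (fbl_norm_ge_diag_sum y_cube y_disj (fun i : 'I_m => f_ge0 (nk i))).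
rewrite lee_fin; apply: le_trans (ler_sum _ (fun (i : 'I_m) _ => f_y i)).
rewrite sumrB sumr_const card_ord sum_geometric_half.
have : 0 <= eps / 2 ^+ m by rewrite divr_ge0 ?exprn_ge0 ?ltW.
lra.
Qed.
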